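(* Let $A\in \mathbb{R}^{m\times n}$ and $b\in \mathbb{R}^m$ with $m<n$. Suppose that the linear system $Ax=b$ is consistent and has a solution $x_*$. Suppose there are index sets $\mathbb{I}_1\subseteq\{1,\dots,m\}$ and $\mathbb{I}_2\subseteq\{1,\dots,n\}$ with $\operatorname{card}(\mathbb{I}_1)=\operatorname{card}(\mathbb{I}_2)=\operatorname{rank}(A)$ such that the submatrix $A_{(\mathbb{I}_1,\mathbb{I}_2)}$ is nonsingular and the subvector $x_{*\mathbb{I}_2}$ has no zero entry. Let $\mathbb{I}_2^{c}=\{1,\dots,n\}\setminus\mathbb{I}_2$. (a) If not all entries of $x_{*\mathbb{I}_2^{c}}$ are $0$, then $Ax=b$ has infinitely many solutions with the same sign pattern as $x_*$. (b) $Ax=b$ has infinitely many solutions $x$ such that $x_{\mathbb{I}_2}$ has the same sign pattern as $x_{*\mathbb{I}_2}$. (c) If $x_{*\mathbb{I}_2^{c}}=0$, then $Ax=b$ has no solution other than $x_*$ with the same sign pattern as $x_*$.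
   Context: For a matrix $X$ and index sets $\mathbb{I}_1,\mathbb{I}_2$, $X_{(\mathbb{I}_1,\mathbb{I}_2)}$ is the submatrix consisting of the entries $X_{(i,j)}$ with $i\in\mathbb{I}_1$, $j\in\mathbb{I}_2$; for a vector $x$, $x_{\mathbb{I}}$ is the subvector of entries $x_{(i)}$, $i\in\mathbb{I}$. $\operatorname{card}$ denotes cardinality. The sign function is $\operatorname{sign}(r)=1,0,-1$ for $r>0$, $r=0$, $r<0$. A vector $x$ has the sign pattern $s\in\{-1,0,1\}^n$ if $\operatorname{sign}(x_{(i)})=s_{(i)}$ for all $i$; two vectors have the same sign pattern if their entrywise signs agree. *)

From HB Require Import structures.
From mathcomp Require Import all_boot all_order all_algebra.
Set Implicit Arguments. Unset Strict Implicit. Unset Printing Implicit Defensive.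
Import Order.TTheory GRing.Theory Num.Theory.
Local Open Scope ring_scope.

(* The square submatrix A_(I1, I2), rows/columns listed in increasing order;
   requires card I2 = card I1 (given by h). *)
Definition subsq (R : Type) (m n : nat) (A : 'M[R]_(m, n))
  (I1 : {set 'I_m}) (I2 : {set 'I_n}) (h : #|I2| = #|I1|) : 'M[R]_#|I1| :=
  \matrix_(i < #|I1|, j < #|I1|) A (enum_val i) (enum_val (cast_ord (esym h) j)).

Definition same_sign (R : numDomainType) (n : nat) (x y : 'cV[R]_n) : Prop :=
  forall i : 'I_n, Num.sg (x i 0) = Num.sg (y i 0).

Definition same_sign_on (R : numDomainType) (n : nat) (I : {set 'I_n})
  (x y : 'cV[R]_n) : Prop :=
  forall i : 'I_n, i \in I -> Num.sg (x i 0) = Num.sg (y i 0).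

Definition infinitely_many (T : eqType) (P : T -> Prop) : Prop :=
  forall s : seq T, exists x, P x /\ x \notin s.

From HB Require Import structures.
From mathcomp Require Import all_boot all_order all_algebra.
From mathcomp Require Import lra.
Set Implicit Arguments.
Unset Strict Implicit.
Unset Printing Implicit Defensive.

Import Order.TTheory GRing.Theory Num.Theory.
Local Open Scope ring_scope.

(* Since A_(I1, I2) is nonsingular and card I1 = rank A, the rows I1 span the
   row space of A. Hence for every j outside I2 the kernel of A contains a
   vector equal to 1 at j, supported on I2 and j, while the only kernel vector
   supported on I2 is 0. Moving x_* by a small positive multiple of such a
   kernel vector keeps every nonzero entry's sign and changes no entry outside
   I2 other than the j-th, which gives (a) and (b); for (c), two solutions with
   the sign pattern of x_* differ by a kernel vector supported on I2. *)

Lemma infinitely_many_sub (T : eqType) (P Q : T -> Prop) :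
  (forall x, P x -> Q x) -> infinitely_many P -> infinitely_many Q.
Proof. by move=> PQ infP s; have [x [/PQ Qx x_notin]] := infP s; exists x. Qed.

Section Perturbation.
Variable R : realFieldType.

Lemma sgr_addr_small (x d : R) :
  x != 0 -> `|d| < `|x| -> Num.sg (x + d) = Num.sg x.
Proof.
move=> x_neq0; rewrite ltr_norml.
have [x_lt0 | x_gt0 | x_eq0] := ltrgtP x 0; last by rewrite x_eq0 eqxx in x_neq0.
- by rewrite ltr0_norm // => /andP[_ d_lt]; rewrite !ltr0_sg //; lra.
- by rewrite gtr0_norm // => /andP[d_gt _]; rewrite !gtr0_sg //; lra.
Qed.

Lemma exists_pos_lt_pos (s : seq R) :
  exists2 e : R, 0 < e & forall r, r \in s -> 0 < r -> e < r.
Proof.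
elim: s => [|r s [e e_gt0 lt_e]]; first by exists 1.
have [r_gt0 | r_le0] := ltrP 0 r; last first.
  exists e => // y; rewrite in_cons => /predU1P[-> r_gt0 | /lt_e //].
  by have := le_lt_trans r_le0 r_gt0; rewrite ltxx.
exists (Num.min e (r / 2)); first by rewrite lt_min e_gt0 divr_gt0.
move=> y; rewrite in_cons gt_min => /predU1P[-> _ | /lt_e lt_ey /lt_ey ->//].
by apply/orP; right; lra.
Qed.

Lemma sg_stable_near (n : nat) (x v : 'cV[R]_n) :
  exists2 e : R, 0 < e & forall t, 0 < t <= e ->
    forall k, x k 0 != 0 -> Num.sg ((x + t *: v) k 0) = Num.sg (x k 0).
Proof.
have [e e_gt0 lt_e] :=
  exists_pos_lt_pos [seq `|x k 0| / `|v k 0| | k <- enum 'I_n].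
exists e => // t /andP[t_gt0 le_te] k xk_neq0.
(* for [v k 0 = 0] the ratio is [x / 0 = 0], which the bound ignores *)
rewrite !mxE sgr_addr_small // normrM gtr0_norm //.
have [-> | vk_neq0] := eqVneq (v k 0) 0; first by rewrite normr0 mulr0 normr_gt0.
have := lt_e _ (map_f _ (mem_enum _ k)).
rewrite divr_gt0 ?normr_gt0 // ltr_pdivlMr ?normr_gt0 // => /(_ isT).
by apply: le_lt_trans; rewrite ler_wpM2r.
Qed.

Lemma infinitely_many_ray (n : nat) (P : 'cV[R]_n -> Prop) (x v : 'cV[R]_n)
    (j : 'I_n) (e : R) :
  v j 0 != 0 -> 0 < e -> (forall t, 0 < t <= e -> P (x + t *: v)) ->
  infinitely_many P.
Proof.
move=> vj_neq0 e_gt0 P_ray s.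
(* [coord] recovers [t] from [x + t *: v] *)
pose coord (y : 'cV[R]_n) := (y j 0 - x j 0) / v j 0.
have [e' e'_gt0 lt_e'] := exists_pos_lt_pos (map coord s).
have t_gt0 : 0 < Num.min e e' by rewrite lt_min e_gt0.
exists (x + Num.min e e' *: v); split; first by apply: P_ray; rewrite t_gt0 ge_min lexx.
apply/negP => /(map_f coord) /lt_e'.
by rewrite /coord !mxE addrAC subrr add0r mulfK // t_gt0 lt_min ltxx andbF => /(_ isT).
Qed.

End Perturbation.

Lemma infinitely_many_sign_stable_solutions (R : realFieldType) (m n : nat)
    (A : 'M[R]_(m, n)) (b : 'cV[R]_m) (xs v : 'cV[R]_n) (j : 'I_n) :
  A *m xs = b -> A *m v = 0 -> v j 0 != 0 ->
  infinitely_many (fun x : 'cV[R]_n =>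
    [/\ A *m x = b,
        forall k, xs k 0 != 0 -> Num.sg (x k 0) = Num.sg (xs k 0)
      & forall k, v k 0 = 0 -> x k 0 = xs k 0]).
Proof.
move=> Axs Av vj_neq0; have [e e_gt0 sg_near] := sg_stable_near xs v.
apply: (infinitely_many_ray (x := xs) vj_neq0 e_gt0) => t t_near; split.
- by rewrite mulmxDr Axs -scalemxAr Av scaler0 addr0.
- exact: sg_near.
- by move=> k vk_eq0; rewrite !mxE vk_eq0 mulr0 addr0.
Qed.

Section SelectionMatrix.
Variables (R : pzRingType) (p n : nat) (g : 'I_p -> 'I_n).

Lemma colsub1_mul_out (w : 'cV[R]_p) (k : 'I_n) :
  k \notin codom g -> (colsub g 1%:M *m w) k 0 = 0.
Proof.
move=> k_out; rewrite mxE big1 // => i _; rewrite !mxE.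
suff /negbTE-> : k != g i by rewrite mul0r.
by apply: contraNneq k_out => ->; apply: codom_f.
Qed.

Lemma colsub1_mul_rowsub (d : 'cV[R]_n) :
  injective g -> (forall k, k \notin codom g -> d k 0 = 0) ->
  colsub g 1%:M *m rowsub g d = d.
Proof.
move=> g_inj d_out; apply/matrixP => k l; rewrite (ord1 l).
have [/codomP[i ->] | k_out] := boolP (k \in codom g); last first.
  by rewrite d_out // colsub1_mul_out.
rewrite mxE (bigD1 i) //= big1 ?addr0 => [|i' i'_neq]; rewrite !mxE.
  by rewrite eqxx mul1r.
by rewrite (inj_eq g_inj) eq_sym (negbTE i'_neq) mul0r.
Qed.

End SelectionMatrix.

Section NonsingularSubmatrix.
Variables (F : fieldType) (m n : nat) (A : 'M[F]_(m, n)).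
Variables (I1 : {set 'I_m}) (I2 : {set 'I_n}) (hc12 : #|I2| = #|I1|).
Hypotheses (hc1 : #|I1| = \rank A) (hns : subsq A hc12 \in unitmx).

Let rowI1 (i : 'I_#|I1|) : 'I_m := enum_val i.
Let colI2 (i : 'I_#|I1|) : 'I_n := enum_val (cast_ord (esym hc12) i).
Let P := rowsub rowI1 A.
Let E := colsub colI2 (1%:M : 'M[F]_n).

Let colI2_inj : injective colI2.
Proof. by move=> i i' /enum_val_inj /cast_ord_inj. Qed.

Let codom_colI2 : codom colI2 =i I2.
Proof.
move=> k; apply/codomP/idP => [[i ->] | kI2]; first exact: enum_valP.
by exists (cast_ord hc12 (enum_rank_in kI2 k)); rewrite /colI2 cast_ordK enum_rankK_in.
Qed.

Let subsq_rowsub_colsub : subsq A hc12 = P *m E.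
Proof. by rewrite -mxsub_mul mulmx1; apply/matrixP => i j; rewrite !mxE. Qed.

Let row_space_rowI1 : (A <= P)%MS.
Proof.
rewrite -(mxrank_leqif_sup (rowsub_sub rowI1 A)).2 eqn_leq mxrankS ?rowsub_sub //=.
by rewrite -hc1 -{1}(mxrank_unit hns) subsq_rowsub_colsub mxrankM_maxl.
Qed.

Let ker_rowI1 (v : 'cV[F]_n) : P *m v = 0 -> A *m v = 0.
Proof. by case/submxP: row_space_rowI1 => D -> Pv; rewrite -mulmxA Pv mulmx0. Qed.

Lemma kernel_vector_outside (j : 'I_n) : j \notin I2 ->
  exists v : 'cV[F]_n,
    [/\ v j 0 = 1, A *m v = 0 & forall k, k \notin I2 -> k != j -> v k 0 = 0].
Proof.
move=> jI2; pose ej : 'cV[F]_n := delta_mx j 0.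
pose w := invmx (subsq A hc12) *m (P *m ej).
have Ew_out k : k \notin I2 -> (E *m w) k 0 = 0.
  by move=> kI2; apply: colsub1_mul_out; rewrite codom_colI2.
exists (ej - E *m w); split.
- by rewrite !(Ew_out, mxE) // eqxx subr0.
- apply: ker_rowI1; rewrite mulmxBr mulmxA -subsq_rowsub_colsub mulmxA.
  by rewrite mulmxV // mul1mx subrr.
- by move=> k kI2 kj; rewrite !(Ew_out, mxE) // (negbTE kj) subr0.
Qed.

Lemma kernel_supported_eq0 (d : 'cV[F]_n) :
  A *m d = 0 -> (forall k, k \notin I2 -> d k 0 = 0) -> d = 0.
Proof.
move=> Ad d_out.
have d_eq : E *m rowsub colI2 d = d.
  by apply: colsub1_mul_rowsub => // k; rewrite codom_colI2; apply: d_out.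
have Pd : P *m d = 0.
  by rewrite mul_rowsub_mx Ad; apply/matrixP => i l; rewrite !mxE.
have Sd : subsq A hc12 *m rowsub colI2 d = 0.
  by rewrite subsq_rowsub_colsub -mulmxA d_eq Pd.
by rewrite -d_eq -(mulKmx hns (rowsub colI2 d)) Sd !mulmx0.
Qed.

End NonsingularSubmatrix.

Lemma infinitely_many_solutions_moving_one_outside (R : realFieldType)
    (m n : nat) (A : 'M[R]_(m, n)) (b : 'cV[R]_m) (xs : 'cV[R]_n)
    (I1 : {set 'I_m}) (I2 : {set 'I_n}) (hc12 : #|I2| = #|I1|) (j : 'I_n) :
  #|I1| = \rank A -> subsq A hc12 \in unitmx -> A *m xs = b -> j \notin I2 ->
  infinitely_many (fun x : 'cV[R]_n =>
    [/\ A *m x = b,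
        forall k, xs k 0 != 0 -> Num.sg (x k 0) = Num.sg (xs k 0)
      & forall k, k \notin I2 -> k != j -> x k 0 = xs k 0]).
Proof.
move=> hc1 hns Axs jI2; have [v [vj Av v_out]] := kernel_vector_outside hc1 hns jI2.
have vj_neq0 : v j 0 != 0 by rewrite vj oner_eq0.
apply: infinitely_many_sub (infinitely_many_sign_stable_solutions Axs Av vj_neq0).
by move=> x [Ax sg_x x_eq]; split=> // k kI2 kj; rewrite x_eq ?v_out.
Qed.

Theorem lemma2p1 (R : realFieldType) (m n : nat) (A : 'M[R]_(m, n))
  (b : 'cV[R]_m) (hmn : (m < n)%N) (xs : 'cV[R]_n) (hxs : A *m xs = b)
  (I1 : {set 'I_m}) (I2 : {set 'I_n})
  (hc1 : #|I1| = \rank A) (hc12 : #|I2| = #|I1|)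
  (hns : subsq A hc12 \in unitmx)
  (hnz : forall i : 'I_n, i \in I2 -> xs i 0 != 0) :
  [/\ (exists j : 'I_n, j \notin I2 /\ xs j 0 != 0) ->
        infinitely_many (fun x : 'cV[R]_n => A *m x = b /\ same_sign x xs),
      infinitely_many (fun x : 'cV[R]_n => A *m x = b /\ same_sign_on I2 x xs)
    & (forall j : 'I_n, j \notin I2 -> xs j 0 = 0) ->
        forall x : 'cV[R]_n, A *m x = b -> same_sign x xs -> x = xs].
Proof.
have solutions_along j :=
  infinitely_many_solutions_moving_one_outside (j := j) hc1 hns hxs.
split.
- case=> j [jI2 xsj_neq0].
  apply: infinitely_many_sub (solutions_along j jI2) => x [Ax sg_x x_eq].
  split=> // k; have [xsk_eq0 | /sg_x //] := eqVneq (xs k 0) 0.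
  have kI2 : k \notin I2 by apply/negP => /hnz; rewrite xsk_eq0 eqxx.
  have kj : k != j by apply: contraNneq xsj_neq0 => <-; rewrite xsk_eq0.
  by rewrite x_eq.
- have : (0 < #|~: I2|)%N.
    by rewrite cardsCs setCK card_ord hc12 hc1 subn_gt0 (leq_ltn_trans (rank_leq_row A)).
  case/card_gt0P => j; rewrite in_setC => /solutions_along.
  by apply: infinitely_many_sub => x [Ax sg_x _]; split=> // k /hnz /sg_x.
- move=> xs_out x Ax sg_x; apply/eqP; rewrite -subr_eq0; apply/eqP.
  apply: (kernel_supported_eq0 hns); first by rewrite mulmxBr Ax hxs subrr.
  move=> k kI2; apply/eqP; rewrite !mxE xs_out // subr0 -sgr_eq0 sg_x.
  by rewrite xs_out ?sgr0.
Qed.
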